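(* For every 2-coloring of the edges of $K_{\mathbb{N},\mathbb{N}}$, the vertex set can be partitioned into a finite set and at most two monochromatic paths (each path finite or one-way infinite, each monochromatic in some color).
   Context: $K_{\mathbb{N},\mathbb{N}}$ is the complete bipartite graph on $\mathbb{N}$ whose parts are the even and the odd positive integers. A monochromatic path is a path all of whose edges have the same color. *)

From mathcomp Require Import all_boot.
Set Implicit Arguments. Unset Strict Implicit. Unset Printing Implicit Defensive.

(* Vertices of K_{N,N} are the positive integers; parts = evens and odds.
   Two vertices are adjacent iff they have different parity. *)
Definition vtx (v : nat) : Prop := 0 < v.
Definition adj (u v : nat) : bool := odd u != odd v.

(* A 2-colouring of the edges: a symmetric c : nat -> nat -> bool; the colour
   of the edge {u,v} is c u v (values on non-edges are irrelevant). *)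
Definition colouring (c : nat -> nat -> bool) : Prop := forall u v, c u v = c v u.

Definition mono_fin_path (c : nat -> nat -> bool) (b : bool) (s : seq nat) : Prop :=
  uniq s /\ (forall v, v \in s -> vtx v) /\
  forall i, i.+1 < size s ->
    adj (nth 0 s i) (nth 0 s i.+1) /\ c (nth 0 s i) (nth 0 s i.+1) = b.

Definition mono_inf_path (c : nat -> nat -> bool) (b : bool) (f : nat -> nat) : Prop :=
  injective f /\ (forall i, vtx (f i)) /\
  forall i, adj (f i) (f i.+1) /\ c (f i) (f i.+1) = b.

Definition mono_path_set (c : nat -> nat -> bool) (P : nat -> Prop) : Prop :=
  exists b : bool,
    (exists s, mono_fin_path c b s /\ forall v, P v <-> v \in s) \/
    (exists f, mono_inf_path c b f /\ forall v, P v <-> exists i, f i = v).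

From mathcomp Require Import all_boot.
From mathcomp Require Import boolp classical_sets filter.
Set Implicit Arguments. Unset Strict Implicit. Unset Printing Implicit Defensive.

(* Fix an ultrafilter U on nat containing all cofinite sets.  A set is "large" on one side
   of K_{N,N} if it contains U-almost all vertices of that side, and a vertex v is "k-big"
   if U-almost every vertex of the other side is joined to v in colour k.

   Both paths are produced by one greedy scheme (section TwoPaths): outside a finite set F
   the vertices are split into T1 and T2, and it suffices that every Ti-vertex can be
   inserted into path i by a finite detour of colour ki that avoids any given finite set
   and rests again at a vertex from which further detours are possible.  Enumerating the
   vertices yields increasing chains of finite paths, whose unions are paths
   (section GrowingPaths).  The detours come from a case analysis on the colour k for
   which k-big vertices are large on the odd side:
   - Case II: the even side is large for (~~k)-big vertices; the paths consist of the
     k-big and of the (~~k)-big vertices, and F is empty.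
   - Case I: both sides are large for k-big vertices.  Path 1 (colour k) takes the
     vertices with infinitely many k-big k-neighbours; the other, "bad", vertices lie
     on path 2 (apart from finitely many), joined in colour ~~k through k-big vertices,
     or in colour k when the bad vertices eventually form a k-coloured complete
     bipartite graph. *)

Definition erel (c : nat -> nat -> bool) (k : bool) : rel nat :=
  fun x y => adj x y && (c x y == k).

Lemma erelE c k x y : odd x != odd y -> c x y = k -> erel c k x y.
Proof. by move=> xy cxy; rewrite /erel /adj xy cxy eqxx. Qed.

Lemma uniq_catP (A B : seq nat) :
  uniq (A ++ B) <-> [/\ uniq A, uniq B & forall x, x \in B -> x \notin A].
Proof.
rewrite cat_uniq; split; first by case/and3P => -> /hasPn ? ->.
by case=> -> -> disj; rewrite /= andbT; apply/hasPn.
Qed.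

Section GrowingPaths.
Variables (c : nat -> nat -> bool) (k : bool) (Q : nat -> seq nat).
Hypothesis Q_grows : forall n, exists s, Q n.+1 = Q n ++ s.
Hypothesis Q_path : forall n,
  [/\ uniq (Q n), sorted (erel c k) (Q n) & forall x, x \in Q n -> vtx x].

Definition chain_union v := exists n, v \in Q n.

Lemma chain_prefix m n : m <= n -> exists s, Q n = Q m ++ s.
Proof.
move=> /subnK <-; elim: (n - m) => [|d [s IH]]; first by exists [::]; rewrite cats0.
by have [t Ht] := Q_grows (d + m); exists (s ++ t); rewrite addSn Ht IH catA.
Qed.

Lemma chain_nth m n i : m <= n -> i < size (Q m) -> nth 0 (Q n) i = nth 0 (Q m) i.
Proof. by move=> /chain_prefix [s ->] im; rewrite nth_cat im. Qed.

Lemma chain_size m n : m <= n -> size (Q m) <= size (Q n).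
Proof. by move=> /chain_prefix [s ->]; rewrite size_cat leq_addr. Qed.

Lemma chain_edge n i : i.+1 < size (Q n) ->
  adj (nth 0 (Q n) i) (nth 0 (Q n) i.+1) /\ c (nth 0 (Q n) i) (nth 0 (Q n) i.+1) = k.
Proof. by have [_ /sortedP step _] := Q_path n => /(step 0) /andP [-> /eqP]. Qed.

(* Unbounded lengths: the i-th vertex is eventually fixed, giving an infinite path. *)
Lemma unbounded_chain_path : (forall i, exists n, i < size (Q n)) ->
  exists f, mono_inf_path c k f /\ forall v, chain_union v <-> exists i, f i = v.
Proof.
move=> unb; pose g i := xchoose (unb i).
have g_size i : i < size (Q (g i)) := xchooseP (unb i).
have nthE n i : i < size (Q n) -> nth 0 (Q n) i = nth 0 (Q (g i)) i.
  move=> ilt; case: (leqP n (g i)) => [le_ng|/ltnW le_gn]; first by rewrite (chain_nth le_ng ilt).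
  by rewrite (chain_nth le_gn (g_size i)).
exists (fun i => nth 0 (Q (g i)) i); split; first split; [|split|].
- move=> i j /= eqij; have [uQ _ _] := Q_path (g i + g j).
  have ilt : i < size (Q (g i + g j)) := leq_trans (g_size i) (chain_size (leq_addr _ _)).
  have jlt : j < size (Q (g i + g j)) := leq_trans (g_size j) (chain_size (leq_addl _ _)).
  by apply/eqP; rewrite -(nth_uniq 0 ilt jlt uQ) (nthE _ _ ilt) (nthE _ _ jlt) eqij.
- by move=> i; have [_ _ vQ] := Q_path (g i); apply/vQ/mem_nth.
- by move=> i; rewrite -(nthE _ _ (ltnW (g_size i.+1))); apply: chain_edge.
- move=> v; split=> [[n vQ]|[i <-]]; last by exists (g i); apply: mem_nth.
  exists (index v (Q n)); have ilt : index v (Q n) < size (Q n) by rewrite index_mem.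
  by rewrite -(nthE _ _ ilt) nth_index.
Qed.

(* Bounded lengths: a chain member of maximal length contains the whole union. *)
Lemma bounded_chain_stable : (exists K, forall n, size (Q n) <= K) ->
  exists N, forall v, chain_union v <-> v \in Q N.
Proof.
move=> [K bnd]; pose P s := `[< exists n, size (Q n) = s >].
have P0 : exists s, P s by exists (size (Q 0)); apply/asboolP; exists 0.
have Pbnd s : P s -> s <= K by move=> /asboolP [n <-].
case: (ex_maxnP P0 Pbnd) => _ /asboolP [N <-] maxN.
exists N => v; split=> [[n vQ]|vQ]; last by exists N.
case: (leqP n N) => [/chain_prefix [s ->]|/ltnW le_Nn]; first by rewrite mem_cat vQ.
have [s eQ] := chain_prefix le_Nn.
suff s0 : s = [::] by rewrite eQ s0 cats0 in vQ.
have le_nN : size (Q n) <= size (Q N) by apply: maxN; apply/asboolP; exists n.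
apply/nilP; rewrite /nilp -(eqn_add2l (size (Q N))) addn0 -size_cat -eQ eqn_leq.
by rewrite le_nN chain_size.
Qed.

Lemma chain_union_path : mono_path_set c chain_union.
Proof.
exists k; have [unb|bnd] := pselect (forall i, exists n, i < size (Q n)).
  by right; apply: unbounded_chain_path.
left; have [|N eQN] := bounded_chain_stable.
  move/existsNP: bnd => [K /forallNP Kbnd]; exists K => n.
  by rewrite leqNgt; apply/negP => lt; apply: (Kbnd n).
have [uQ _ vQ] := Q_path N; exists (Q N); split=> //; split=> //; split=> //.
exact: chain_edge.
Qed.

End GrowingPaths.

Definition link_spec (c : nat -> nat -> bool) (k : bool) (G E : nat -> Prop)
    (X : seq nat) (e v : nat) (s : seq nat) : Prop :=
  [/\ uniq s, forall x, x \in s -> x \notin X /\ G x, v \in s,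
      path (erel c k) e s & E (last e s)].

Lemma link_spec_sub c k (G G' E : nat -> Prop) X e v s :
  (forall x, G x -> G' x) -> link_spec c k G E X e v s -> link_spec c k G' E X e v s.
Proof. by move=> GG' [? sX ? ? ?]; split=> // x /sX [? /GG']. Qed.

Section Extension.
Variables (c : nat -> nat -> bool) (k : bool) (G T E : nat -> Prop).

Definition ends_in (Q : seq nat) := if Q is h :: t then E (last h t) else True.

Definition path_state (Q Qo : seq nat) :=
  [/\ uniq (Q ++ Qo), forall x, x \in Q ++ Qo -> G x, sorted (erel c k) Q & ends_in Q].

Definition link (X : seq nat) (e v : nat) : seq nat :=
  xget [::] [set s | link_spec c k G E X e v s].
Definition start (X : seq nat) : nat := xget 0 [set e | [/\ E e, e \notin X & G e]].

Definition extend (Q Qo : seq nat) (n : nat) : seq nat :=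
  if Q is h :: t then Q ++ link (Q ++ Qo) (last h t) n
  else let e := start (n :: Qo) in e :: link (e :: Qo) e n.

Hypothesis linkable : forall (X : seq nat) e v, E e -> T v -> v \notin X ->
  exists s, link_spec c k G E X e v s.
Hypothesis startable : forall (X : seq nat) v, T v -> exists e, [/\ E e, e \notin X & G e].

Lemma linkP (X : seq nat) e v :
  E e -> T v -> v \notin X -> link_spec c k G E X e v (link X e v).
Proof. by move=> Ee Tv vX; apply: xgetPex; apply: linkable. Qed.

Lemma startP (X : seq nat) v : T v -> [/\ E (start X), start X \notin X & G (start X)].
Proof. by move=> Tv; apply: xgetPex (startable X Tv). Qed.

Lemma extend_consP h t Qo n : path_state (h :: t) Qo -> T n -> n \notin (h :: t) ++ Qo ->
  [/\ exists s, extend (h :: t) Qo n = (h :: t) ++ s, path_state (extend (h :: t) Qo n) Qo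
    & n \in extend (h :: t) Qo n].
Proof.
move=> [uQ GQ sQ EQ] Tn nQ; rewrite /extend; set Q := h :: t in uQ GQ sQ EQ nQ *.
have [us sX ns ps Es] := linkP EQ Tn nQ; set s := link _ _ _ in us sX ns ps Es *.
split; [by exists s| |by rewrite mem_cat ns orbT]; split.
- rewrite -catA uniq_catCA cat_uniq us uQ andbT.
  by apply/hasPn => x xQ; apply/negP => /sX []; rewrite xQ.
- move=> x; rewrite -catA !mem_cat => /or3P [xQ|/sX [] //|xQo];
  by apply: GQ; rewrite mem_cat ?xQ ?xQo ?orbT.
- by rewrite /= cat_path ps andbT.
- by rewrite /= last_cat.
Qed.

Lemma extendP Q Qo n : path_state Q Qo -> T n -> n \notin Q ++ Qo ->
  [/\ exists s, extend Q Qo n = Q ++ s, path_state (extend Q Qo n) Qo & n \in extend Q Qo n].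
Proof.
case: Q => [|h t]; last exact: extend_consP.
move=> [uQ GQ _ _] Tn nQ.
have [Ee eX Ge] := startP (n :: Qo) Tn; set e := start _ in Ee eX Ge.
move: eX; rewrite inE negb_or eq_sym => /andP [ne eQo].
have st_e : path_state [:: e] Qo.
  split=> //=; first by rewrite eQo; move: uQ.
  by move=> x; rewrite inE => /orP [/eqP ->|/GQ].
have ne' : n \notin [:: e] ++ Qo by rewrite inE negb_or ne.
have -> : extend [::] Qo n = extend [:: e] Qo n by [].
by have [[s ->] st nin] := extend_consP st_e Tn ne'; split=> //; exists (e :: s).
Qed.

End Extension.

Lemma path_state_flip c k k' (G E E' : nat -> Prop) (A B : seq nat) :
  path_state c k G E A B -> sorted (erel c k') B -> ends_in E' B -> path_state c k' G E' B A.
Proof.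
move=> [uAB GAB _ _] sB EB; split=> //; first by rewrite uniq_catC.
by move=> x; rewrite mem_cat orbC -mem_cat => /GAB.
Qed.

Definition two_path_partition (c : nat -> nat -> bool) : Prop :=
  exists (F : seq nat) (P1 P2 : nat -> Prop),
    mono_path_set c P1 /\ mono_path_set c P2 /\
    (forall v, vtx v <-> [\/ v \in F, P1 v | P2 v]) /\
    (forall v, ~ (v \in F /\ P1 v)) /\
    (forall v, ~ (v \in F /\ P2 v)) /\
    (forall v, ~ (P1 v /\ P2 v)).

(* Outside a finite set [F] the vertices are split into [T1]
   and [T2]; path i, of colour ki, is responsible for the vertices of Ti and rests at
   vertices of Ei. *)
Section TwoPaths.
Variables (c : nat -> nat -> bool) (k1 k2 : bool) (F : seq nat) (T1 T2 E1 E2 : nat -> Prop).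

Definition T12 x := T1 x \/ T2 x.

Hypothesis F_vtx : forall v, v \in F -> vtx v.
Hypothesis covered : forall v, vtx v -> [\/ v \in F, T1 v | T2 v].
Hypothesis T12_vtx : forall v, T12 v -> vtx v /\ v \notin F.
Hypothesis link1 : forall (X : seq nat) e v, E1 e -> T1 v -> v \notin X ->
  exists s, link_spec c k1 T12 E1 X e v s.
Hypothesis start1 : forall (X : seq nat) v, T1 v -> exists e, [/\ E1 e, e \notin X & T12 e].
Hypothesis link2 : forall (X : seq nat) e v, E2 e -> T2 v -> v \notin X ->
  exists s, link_spec c k2 T12 E2 X e v s.
Hypothesis start2 : forall (X : seq nat) v, T2 v -> exists e, [/\ E2 e, e \notin X & T12 e].

Definition step n (Q : seq nat * seq nat) : seq nat * seq nat :=
  let: (Q1, Q2) := Q in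
  if n \in Q1 ++ Q2 then Q
  else if `[< T1 n >] then (extend c k1 T12 E1 Q1 Q2 n, Q2)
  else if `[< T2 n >] then (Q1, extend c k2 T12 E2 Q2 Q1 n) else Q.

Fixpoint stage n : seq nat * seq nat :=
  if n is m.+1 then step m (stage m) else ([::], [::]).

Definition stage_ok (Q : seq nat * seq nat) :=
  path_state c k1 T12 E1 Q.1 Q.2 /\ path_state c k2 T12 E2 Q.2 Q.1.

Lemma step_spec n Q : stage_ok Q ->
  [/\ stage_ok (step n Q), exists s, (step n Q).1 = Q.1 ++ s,
      exists s, (step n Q).2 = Q.2 ++ s &
      vtx n -> n \notin F -> n \in (step n Q).1 ++ (step n Q).2].
Proof.
case: Q => Q1 Q2 ok; have [st1 st2] := ok.
have same (Q : seq nat) : exists s, Q = Q ++ s by exists [::]; rewrite cats0.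
rewrite /step; case: ifP => [nQ|/negbT nQ]; first by split=> // _ _.
case: asboolP => [T1n|nT1].
  have [grow st nin] := extendP link1 start1 st1 T1n nQ.
  have [_ _ s2 e2] := st2.
  by split=> //=; [split=> //; apply: path_state_flip st s2 e2|rewrite mem_cat nin].
case: asboolP => [T2n|nT2].
  have nQ' : n \notin Q2 ++ Q1 by rewrite mem_cat orbC -mem_cat.
  have [grow st nin] := extendP link2 start2 st2 T2n nQ'.
  have [_ _ s1 e1] := st1.
  by split=> //=; [split=> //; apply: path_state_flip st s1 e1|rewrite mem_cat nin orbT].
by split=> // vn; case: (covered vn) => [->//|/nT1|/nT2].
Qed.

Lemma stage_okP n : stage_ok (stage n).
Proof. by elim: n => [|n IH]; [split; split|have [] := step_spec n IH]. Qed.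

Lemma stage_vtx v : (exists n, v \in (stage n).1) \/ (exists n, v \in (stage n).2) ->
  vtx v /\ v \notin F.
Proof.
have inQ n : v \in (stage n).1 ++ (stage n).2 -> vtx v /\ v \notin F.
  by have [[_ inG _ _] _] := stage_okP n => /inG /T12_vtx.
by case=> [[n vn]|[n vn]]; apply: (inQ n); rewrite mem_cat vn ?orbT.
Qed.

Lemma stage_grow1 n : exists s, (stage n.+1).1 = (stage n).1 ++ s.
Proof. by have [] := step_spec n (stage_okP n). Qed.

Lemma stage_grow2 n : exists s, (stage n.+1).2 = (stage n).2 ++ s.
Proof. by have [] := step_spec n (stage_okP n). Qed.

(* The two paths stay disjoint: both stage sets sit inside a common later stage. *)
Lemma stage_disjoint m n v : v \in (stage m).1 -> v \in (stage n).2 -> False.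
Proof.
have [[u _ _ _] _] := stage_okP (m + n).
have [s1 e1] := chain_prefix stage_grow1 (leq_addr n m).
have [s2 e2] := chain_prefix stage_grow2 (leq_addl m n).
move: u; rewrite e1 e2 => /uniq_catP [_ _ disj] vm vn.
by move: (disj v); rewrite !mem_cat vm vn => /(_ isT).
Qed.

Theorem two_paths_of_links : two_path_partition c.
Proof.
exists F, (chain_union (fun n => (stage n).1)), (chain_union (fun n => (stage n).2)).
split; [|split; [|split; [|split; [|split]]]].
- apply: (@chain_union_path c k1 _ stage_grow1) => n.
  have [[/uniq_catP [u _ _] _ s _] _] := stage_okP n.
  by split=> // x xQ; apply: (proj1 (stage_vtx _)); left; exists n.
- apply: (@chain_union_path c k2 _ stage_grow2) => n.
  have [_ [/uniq_catP [u _ _] _ s _]] := stage_okP n.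
  by split=> // x xQ; apply: (proj1 (stage_vtx _)); right; exists n.
- move=> v; split=> [vv|[/F_vtx //|P1v|P2v]]; last 2 first.
  + by apply: (proj1 (stage_vtx _)); left.
  + by apply: (proj1 (stage_vtx _)); right.
  case: (boolP (v \in F)) => [vF|nF]; first exact: Or31.
  have [_ _ _ /(_ vv nF)] := step_spec v (stage_okP v).
  by rewrite mem_cat => /orP [vS|vS]; [apply: Or32|apply: Or33]; exists v.+1.
- by move=> v [vF P1v]; have [_] := stage_vtx (or_introl P1v); rewrite vF.
- by move=> v [vF P2v]; have [_] := stage_vtx (or_intror P2v); rewrite vF.
- by move=> v [[m vm] [n vn]]; apply: (stage_disjoint vm vn).
Qed.

End TwoPaths.

Lemma cofinite_ultrafilter : exists U : (nat -> Prop) -> Prop,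
  [/\ forall S T, U S -> U T -> U (fun x => S x /\ T x),
      forall S T : nat -> Prop, (forall x, S x -> T x) -> U S -> U T,
      forall S, U S \/ U (fun x => ~ S x),
      forall N, U (fun x => N <= x) &
      ~ U (fun _ => False)].
Proof.
have [G [ultraG cofinG]] := ultraFilterLemma (@eventually_filter).
exists G; split.
- by move=> S T; apply: filterI.
- by move=> S T; apply: filterS.
- by move=> S; apply: (in_ultra_setVsetC S ultraG).
- by move=> N; apply: cofinG; exists N.
- exact: filter_not_empty.
Qed.

Definition Inf (S : nat -> Prop) := forall X : seq nat, exists u, S u /\ u \notin X.

Lemma not_Inf_cover (S : nat -> Prop) :
  ~ Inf S -> exists Y : seq nat, forall u, S u -> u \in Y.
Proof.
move=> /existsNP [Y /forallNP noS]; exists Y => u Su.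
by apply: contrapT => /negP uY; apply: (noS u).
Qed.

(* Hypotheses [x \notin a :: s] are split into [x != a] and [x \notin s], so that the
   uniqueness of an explicit short list of freshly chosen vertices can be checked. *)
Ltac split_fresh := repeat match goal with
  | H : is_true (?x \notin ?a :: ?s) |- _ =>
    rewrite inE negb_or in H; case/andP: H => ? ?
  | H : is_true (?x \notin ?s ++ ?t) |- _ =>
    rewrite mem_cat negb_or in H; case/andP: H => ? ?
  end.

Ltac solve_uniq := rewrite /= ?inE ?negb_or ?andbT;
  repeat match goal with |- is_true (_ && _) => apply/andP; split end;
  try done; try (by rewrite eq_sym).

Lemma forall_cons (P : nat -> Prop) a (s : seq nat) :
  P a -> (forall x, x \in s -> P x) -> forall x, x \in a :: s -> P x.
Proof. by move=> Pa Ps x; rewrite inE => /orP [/eqP ->|/Ps]. Qed.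

Definition side (p : bool) (v : nat) := 0 < v /\ odd v = p.
Definition emb (p : bool) (n : nat) := if p then n.*2.+1 else n.*2.+2.

Lemma emb_side p n : side p (emb p n).
Proof. by case: p; rewrite /side /= odd_double. Qed.

Lemma emb_ge p n : n <= emb p n.
Proof. by case: p; rewrite /emb -addnn; [apply: leqW|do 2 apply: leqW]; apply: leq_addr. Qed.

Lemma odd_neq x y p : odd x = p -> odd y = ~~ p -> odd x != odd y.
Proof. by move=> -> ->; case: p. Qed.

Lemma odd_neqN x y p : odd x = ~~ p -> odd y = p -> odd x != odd y.
Proof. by move=> -> ->; case: p. Qed.

Section Ultrafilter.
Variables (c : nat -> nat -> bool) (hc : colouring c) (U : (nat -> Prop) -> Prop).
Hypotheses (U_meet : forall S T, U S -> U T -> U (fun x => S x /\ T x))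
  (U_sub : forall S T : nat -> Prop, (forall x, S x -> T x) -> U S -> U T)
  (U_compl : forall S, U S \/ U (fun x => ~ S x))
  (U_cofin : forall N, U (fun x => N <= x)) (U_proper : ~ U (fun _ => False)).

Definition large p (S : nat -> Prop) := U (fun n => S (emb p n)).

Lemma largeI p S T : large p S -> large p T -> large p (fun x => S x /\ T x).
Proof. exact: U_meet. Qed.

Lemma largeS p (S T : nat -> Prop) :
  (forall x, side p x -> S x -> T x) -> large p S -> large p T.
Proof. by move=> ST; apply: U_sub => n; apply/ST/emb_side. Qed.

Lemma largeC p S : large p S \/ large p (fun x => ~ S x).
Proof. exact: U_compl. Qed.

Lemma large_fresh p S (X : seq nat) : large p S -> exists v, [/\ side p v, S v & v \notin X].
Proof.
move=> lS; pose N := (\max_(x <- X) x).+1.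
have [n [Sn leNn]] : exists n, S (emb p n) /\ N <= n.
  apply: contrapT => none; apply: U_proper; apply: U_sub (U_meet lS (U_cofin N)).
  by move=> n ?; apply: none; exists n.
exists (emb p n); split=> //; first exact: emb_side.
apply/negP => vX; have := @leq_bigmax_seq _ X xpredT id _ vX isT.
by rewrite leqNgt (leq_trans leNn (emb_ge p n)).
Qed.

Definition big k v := large (~~ odd v) (fun u => c v u = k).

Lemma big_or k v : big k v \/ big (~~ k) v.
Proof.
case: (largeC (~~ odd v) (fun u => c v u = k)) => kv; [by left|right].
by apply: largeS kv => x _; case: (c v x); case: (k).
Qed.

(* If the k-big vertices are large on side p, any k-big vertex [v] can be
   inserted by a k-coloured detour between k-big vertices of side p: a common k-neighbour
   suffices when [v] lies on side p, otherwise [v] is reached through two further k-big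
   vertices of side p. *)
Lemma link_big p k : large p (big k) -> forall (X : seq nat) e v,
  side p e -> big k e -> vtx v -> big k v -> v \notin X ->
  exists s, link_spec c k vtx (fun x => side p x /\ big k x) X e v s.
Proof.
move=> lp X e v [e0 ep] ek v0 vk vX.
have ek' : large (~~ p) (fun u => c e u = k) by rewrite /big ep in ek.
case: (boolP (odd v == p)) => /eqP vp.
- have vk' : large (~~ p) (fun u => c v u = k) by rewrite /big vp in vk.
  have [b [[b0 bp] [be bv] bX]] := large_fresh (v :: X) (largeI ek' vk').
  exists [:: b; v]; split.
  + by split_fresh; solve_uniq.
  + by apply: forall_cons; [split_fresh|apply: forall_cons].
  + by rewrite !inE eqxx orbT.
  + have bv' : c b v = k by rewrite hc.
    by rewrite /= (erelE (odd_neq ep bp) be) (erelE (odd_neqN bp vp) bv').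
  + by [].
- have vp' : odd v = ~~ p by move: vp; case: (odd v); case: (p).
  have vk' : large p (fun u => c v u = k) by rewrite /big vp' negbK in vk.
  have [a1 [[a10 a1p] [a1v a1k] a1X]] := large_fresh (v :: X) (largeI vk' lp).
  have [a2 [[a20 a2p] [a2v a2k] a2X]] := large_fresh (a1 :: v :: X) (largeI vk' lp).
  have a1k' : large (~~ p) (fun u => c a1 u = k) by rewrite /big a1p in a1k.
  have [b [[b0 bp] [be ba1] bX]] := large_fresh (a2 :: a1 :: v :: X) (largeI ek' a1k').
  exists [:: b; a1; v; a2]; split.
  + by split_fresh; solve_uniq.
  + by split_fresh; do 4 (apply: forall_cons; first done).
  + by rewrite !inE eqxx !orbT.
  + have ba1' : c b a1 = k by rewrite hc.
    have a1v' : c a1 v = k by rewrite hc.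
    rewrite /= (erelE (odd_neq ep bp) be) (erelE (odd_neqN bp a1p) ba1').
    by rewrite (erelE (odd_neq a1p vp') a1v') (erelE (odd_neqN vp' a2p) a2v).
  + by [].
Qed.

Lemma caseII k : large true (big k) -> large false (big (~~ k)) -> two_path_partition c.
Proof.
move=> lA lB.
apply: (@two_paths_of_links c k (~~ k) [::] (fun v => vtx v /\ big k v)
  (fun v => vtx v /\ big (~~ k) v) (fun x => side true x /\ big k x)
  (fun x => side false x /\ big (~~ k) x)).
- by [].
- by move=> v vv; case: (big_or k v) => vk; [apply: Or32|apply: Or33].
- by move=> v [[vv _]|[vv _]].
- move=> X e v [ep ek] [vv vk] vX; have [s ls] := link_big lA ep ek vv vk vX.
  by exists s; apply: link_spec_sub ls => x xv; case: (big_or k x); [left|right].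
- by move=> X v _; have [e [ep ek eX]] := large_fresh X lA; exists e; split=> //; left; case: ep.
- move=> X e v [ep ek] [vv vk] vX; have [s ls] := link_big lB ep ek vv vk vX.
  by exists s; apply: link_spec_sub ls => x xv; case: (big_or k x); [left|right].
- by move=> X v _; have [e [ep ek eX]] := large_fresh X lB; exists e; split=> //; right; case: ep.
Qed.

Section CaseI.
Variable k : bool.
Hypotheses (bigA : large true (big k)) (bigB : large false (big k)).

Lemma big_large q : large q (big k).
Proof. by case: q. Qed.

Definition good_nbr v u := [/\ c v u = k, big k u & side (~~ odd v) u].

Definition path1_end x := side true x /\ big k x.
Definition path1_vtx v x := x = v \/ (vtx x /\ big k x).

(* v odd: the detour e-b-a-b1-v-b2-a' through good neighbours b1, b2 of v, with b, a, a'
   k-big vertices chosen as common k-neighbours. *)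
Lemma link_good_odd (X : seq nat) e v : path1_end e -> vtx v -> odd v ->
  Inf (good_nbr v) -> v \notin X -> exists s, link_spec c k (path1_vtx v) path1_end X e v s.
Proof.
move=> [[e0 ep] ek] v0 vp infv vX.
have ek' : large false (fun u => c e u = k) by rewrite /big ep in ek.
have [b1 [[b1v b1k [b10 b1p]] b1X]] := infv (v :: X).
have [b2 [[b2v b2k [b20 b2p]] b2X]] := infv (b1 :: v :: X).
rewrite vp /= in b1p b2p.
have [b [[b0 bp] [be bk] bX]] := large_fresh (b2 :: b1 :: v :: X) (largeI ek' bigB).
have bk' : large true (fun u => c b u = k) by rewrite /big bp in bk.
have b1k' : large true (fun u => c b1 u = k) by rewrite /big b1p in b1k.
have b2k' : large true (fun u => c b2 u = k) by rewrite /big b2p in b2k.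
have [a [[a0 ap] [[ab ab1] ak] aX]] :=
  large_fresh (b :: b2 :: b1 :: v :: X) (largeI (largeI bk' b1k') bigA).
have [a' [[a'0 a'p] [a'b2 a'k] a'X]] :=
  large_fresh (a :: b :: b2 :: b1 :: v :: X) (largeI b2k' bigA).
exists [:: b; a; b1; v; b2; a']; split.
- by split_fresh; solve_uniq.
- split_fresh; do 3 (apply: forall_cons; first by split=> //; right).
  apply: forall_cons; first by split=> //; left.
  by do 2 (apply: forall_cons; first by split=> //; right).
- by rewrite !inE eqxx !orbT.
- have ab1' : c a b1 = k by rewrite hc.
  have b1v' : c b1 v = k by rewrite hc.
  rewrite /= (erelE (odd_neq ep bp) be) (erelE (odd_neqN (p := true) bp ap) ab).
  rewrite (erelE (odd_neq ap b1p) ab1') (erelE (odd_neqN (p := true) b1p vp) b1v').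
  by rewrite (erelE (odd_neq vp b2p) b2v) (erelE (odd_neqN (p := true) b2p a'p) a'b2).
- by [].
Qed.

(* v even: the detour e-b-a1-v-a2 through good neighbours a1, a2 of v. *)
Lemma link_good_even (X : seq nat) e v : path1_end e -> vtx v -> ~~ odd v ->
  Inf (good_nbr v) -> v \notin X -> exists s, link_spec c k (path1_vtx v) path1_end X e v s.
Proof.
move=> [[e0 ep] ek] v0 vp infv vX.
have ek' : large false (fun u => c e u = k) by rewrite /big ep in ek.
have [a1 [[a1v a1k [a10 a1p]] a1X]] := infv (v :: X).
have [a2 [[a2v a2k [a20 a2p]] a2X]] := infv (a1 :: v :: X).
rewrite (negbTE vp) /= in a1p a2p.
have a1k' : large false (fun u => c a1 u = k) by rewrite /big a1p in a1k.
have [b [[b0 bp] [[be ba1] bk] bX]] :=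
  large_fresh (a2 :: a1 :: v :: X) (largeI (largeI ek' a1k') bigB).
exists [:: b; a1; v; a2]; split.
- by split_fresh; solve_uniq.
- split_fresh; do 2 (apply: forall_cons; first by split=> //; right).
  apply: forall_cons; first by split=> //; left.
  by apply: forall_cons; first by split=> //; right.
- by rewrite !inE eqxx !orbT.
- have ba1' : c b a1 = k by rewrite hc.
  have a1v' : c a1 v = k by rewrite hc.
  rewrite /= (erelE (odd_neq ep bp) be) (erelE (odd_neqN (p := true) bp a1p) ba1').
  rewrite (erelE (odd_neq a1p (negbTE vp)) a1v').
  by rewrite (erelE (odd_neqN (p := true) (negbTE vp) a2p) a2v).
- by [].
Qed.

Definition bad v := vtx v /\ ~ Inf (good_nbr v).

Lemma big_not_bad x : big k x -> ~ bad x.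
Proof.
move=> xk [_]; apply=> X.
by have [u [us [cu uk] uX]] := large_fresh X (largeI xk (big_large (~~ odd x))); exists u.
Qed.

(* Two bad vertices on the same side have fresh common k-big neighbours joined to both in
   colour ~~k: U-almost every vertex of the other side is k-big, and only finitely many of
   them are good neighbours of either. *)
Lemma bad_connector v w (X : seq nat) : bad v -> bad w -> odd v = odd w ->
  exists u, [/\ side (~~ odd v) u, big k u, c v u = ~~ k, c w u = ~~ k & u \notin X].
Proof.
move=> [_ /not_Inf_cover [Yv Yv_good]] [_ /not_Inf_cover [Yw Yw_good]] vw.
have [u [us uk]] := large_fresh (Yv ++ Yw ++ X) (big_large (~~ odd v)).
rewrite !mem_cat !negb_or => /and3P [uYv uYw uX].
have not_k b : b <> k -> b = ~~ k by case: b; case: (k).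
exists u; split=> //; apply: not_k => cu.
- by move: uYv; rewrite Yv_good.
- by move: uYw; rewrite Yw_good //; split=> //; rewrite -vw.
Qed.

Definition many_bad p := Inf (fun u => bad u /\ odd u = p).

Definition bridges := forall X : seq nat, exists a b,
  [/\ bad a /\ odd a = true, bad b /\ odd b = false, c a b = ~~ k & a \notin X /\ b \notin X].

Lemma bridges_from p (X : seq nat) : bridges -> exists x y,
  [/\ bad x /\ odd x = p, bad y /\ odd y = ~~ p, c x y = ~~ k & x \notin X /\ y \notin X].
Proof.
move=> /(_ X) [a [b [a_bad b_bad ab [aX bX]]]].
by case: p; [exists a, b|exists b, a; rewrite hc].
Qed.

Section Path2.
Variable F : seq nat.

Definition path2_end v := bad v /\ v \notin F.
Definition path2_vtx x := (vtx x /\ big k x) \/ path2_end x.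

Lemma link_bad_same (X : seq nat) e v : path2_end e -> path2_end v -> odd e = odd v ->
  v \notin X -> exists s, link_spec c (~~ k) path2_vtx path2_end X e v s.
Proof.
move=> [e_bad eF] [v_bad vF] ev vX.
have [u [[u0 up] uk eu vu uX]] := bad_connector (v :: X) e_bad v_bad ev.
exists [:: u; v]; split.
- by split_fresh; solve_uniq.
- split_fresh; apply: forall_cons; first by split=> //; left.
  by apply: forall_cons; first by split=> //; right.
- by rewrite !inE eqxx orbT.
- have uv : c u v = ~~ k by rewrite hc.
  by rewrite /= (erelE (odd_neq erefl up) eu) (erelE (odd_neqN up (esym ev)) uv).
- by [].
Qed.

(* Opposite sides: cross a bridge x-y, reaching x from e and v from y by connectors. *)
Lemma link_bad_across (X : seq nat) e v : bridges -> path2_end e -> path2_end v ->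
  odd e != odd v -> v \notin X -> exists s, link_spec c (~~ k) path2_vtx path2_end X e v s.
Proof.
move=> br [e_bad eF] [v_bad vF] ev vX.
have ve : odd v = ~~ odd e by move: ev; case: (odd v); case: (odd e).
have [x [y [[x_bad xp] [y_bad yp] xy [xY yY]]]] := bridges_from (odd e) (v :: X ++ F) br.
have x_ne_y : x != y by apply/eqP => exy; move: yp; rewrite -exy xp; case: (odd e).
have [u1 [[u10 u1p] u1k eu1 xu1 u1X]] := bad_connector (y :: x :: v :: X) e_bad x_bad (esym xp).
have [u2 [[u20 u2p] u2k yu2 vu2 u2X]] :=
  bad_connector (u1 :: y :: x :: v :: X) y_bad v_bad (etrans yp (esym ve)).
split_fresh; exists [:: u1; x; y; u2; v]; split.
- by solve_uniq.
- apply: forall_cons; first by split=> //; left.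
  do 2 (apply: forall_cons; first by split=> //; right).
  apply: forall_cons; first by split=> //; left.
  by apply: forall_cons; first by split=> //; right.
- by rewrite !inE eqxx !orbT.
- have u1x : c u1 x = ~~ k by rewrite hc.
  have u2v : c u2 v = ~~ k by rewrite hc.
  have vy : odd v = odd y by rewrite ve yp.
  rewrite /= (erelE (odd_neq erefl u1p) eu1) (erelE (odd_neqN u1p xp) u1x).
  rewrite (erelE (odd_neq xp yp) xy) (erelE (odd_neq erefl u2p) yu2).
  by rewrite (erelE (odd_neqN u2p vy) u2v).
- by [].
Qed.

(* Degenerate case: all edges between bad vertices of opposite sides outside [F] have
   colour k; path 2 then alternates between the (infinite) bad sets of the two sides. *)
Lemma link_bad_mono (X : seq nat) e v : many_bad true -> many_bad false ->
  (forall x y, path2_end x -> path2_end y -> odd x != odd y -> c x y = k) ->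
  path2_end e -> path2_end v -> v \notin X -> exists s, link_spec c k path2_vtx path2_end X e v s.
Proof.
move=> infA infB cross e2 v2 vX.
case: (boolP (odd e == odd v)) => ev; last first.
  exists [:: v]; split=> //; first by apply: forall_cons; first by split=> //; right.
    by rewrite inE eqxx.
  by rewrite /= (erelE ev (cross _ _ e2 v2 ev)).
have inf_other : many_bad (~~ odd e) by case: (odd e).
have [w [[w_bad wp] wY]] := inf_other (v :: X ++ F); split_fresh.
have w2 : path2_end w by [].
have ew : odd e != odd w by rewrite wp; case: (odd e).
have wv : odd w != odd v by rewrite wp -(eqP ev); case: (odd e).
exists [:: w; v]; split.
- by solve_uniq.
- apply: forall_cons; first by split=> //; right.
  by apply: forall_cons; first by split=> //; right.
- by rewrite !inE eqxx orbT.
- by rewrite /= (erelE ew (cross _ _ e2 w2 ew)) (erelE wv (cross _ _ w2 v2 wv)).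
- by [].
Qed.

Lemma caseI_of_links k2 : (forall x, x \in F -> bad x) ->
  (forall (X : seq nat) e v, path2_end e -> path2_end v -> v \notin X ->
     exists s, link_spec c k2 path2_vtx path2_end X e v s) ->
  (forall v, path2_end v -> many_bad (odd v)) -> two_path_partition c.
Proof.
move=> F_bad link2 inf2.
pose T1 v := vtx v /\ ~ bad v.
have big_T1 x : vtx x -> big k x -> T1 x by move=> x0 xk; split=> //; apply: big_not_bad.
have path2_T x : path2_vtx x -> T1 x \/ path2_end x.
  by case=> [[x0 xk]|x2]; [left; apply: big_T1|right].
apply: (@two_paths_of_links c k k2 F T1 path2_end path1_end path2_end).
- by move=> v /F_bad [].
- move=> v v0; case: (boolP (v \in F)) => vF; first exact: Or31.
  by case: (pselect (bad v)) => vb; [apply: Or33|apply: Or32].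
- by move=> v [[v0 vb]|[[v0 _] vF]]; split=> //; apply/negP => /F_bad.
- move=> X e v e1 [v0 vb] vX.
  have infv : Inf (good_nbr v) by apply: contrapT => fin; apply: vb.
  have [s ls] : exists s, link_spec c k (path1_vtx v) path1_end X e v s.
    by case: (boolP (odd v)) => vp; [apply: link_good_odd|apply: link_good_even].
  by exists s; apply: link_spec_sub ls => x [->|[x0 xk]]; left; [|apply: big_T1].
- move=> X v _; have [e [ep ek eX]] := large_fresh X bigA.
  by exists e; split=> //; left; apply: big_T1 => //; case: ep.
- move=> X e v e2 v2 vX; have [s ls] := link2 X e v e2 v2 vX.
  by exists s; apply: link_spec_sub path2_T ls.
- move=> X v v2; have [e [[e_bad ep] eY]] := inf2 v v2 (X ++ F); split_fresh.
  by exists e; split=> //; right.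
Qed.

End Path2.

Lemma bad_side_cover p :
  exists Z : seq nat, forall v, bad v -> odd v = p -> v \in Z \/ many_bad p.
Proof.
case: (pselect (many_bad p)) => [inf|/not_Inf_cover [Z ZP]]; first by exists [::]; right.
by exists Z => v vb vp; left; apply: ZP.
Qed.

Definition bad_in (Z : seq nat) := [seq x <- Z | `[< bad x >]].

Lemma bad_inP (Z : seq nat) x : x \in bad_in Z -> bad x.
Proof. by rewrite mem_filter => /andP [/asboolP]. Qed.

Lemma bad_notin (Z : seq nat) x : path2_end (bad_in Z) x -> x \notin Z.
Proof.
by move=> [xb]; rewrite mem_filter; apply: contra => xZ; apply/andP; split=> //; apply/asboolP.
Qed.

(* Degenerate subcase: infinitely many bad vertices on both sides, and no bridges; then
   outside a finite set all edges between bad vertices have colour k. *)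
Lemma caseI_mono : many_bad true -> many_bad false -> ~ bridges -> two_path_partition c.
Proof.
move=> infA infB /existsNP [X0 /forallNP nobr].
have X0P a b : bad a -> odd a -> bad b -> ~~ odd b -> a \notin X0 -> b \notin X0 -> c a b = k.
  move=> ab ap bb bp aX bX; apply: contrapT => cab; apply: (nobr a); exists b.
  by split=> //; [rewrite (negbTE bp)|move: cab; case: (c a b); case: (k)].
apply: (@caseI_of_links (bad_in X0) k) => [x /bad_inP //|X e v e2 v2 vX|v _].
  2: by case: (odd v).
apply: link_bad_mono => // x y x2 y2 xy.
have [[x_bad _] [y_bad _]] := (x2, y2); have [xX yX] := (bad_notin x2, bad_notin y2).
case xp: (odd x) in xy.
  have yp : ~~ odd y by move: xy; case: (odd y).
  exact: X0P.
have yp : odd y by move: xy; case: (odd y).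
by rewrite hc; apply: X0P; rewrite ?xp.
Qed.

(* Main subcase: path 2 has colour ~~k; F consists of the bad vertices of the sides with
   only finitely many of them. *)
Lemma caseI_main : (many_bad true -> many_bad false -> bridges) -> two_path_partition c.
Proof.
move=> br; have [ZA ZAP] := bad_side_cover true; have [ZB ZBP] := bad_side_cover false.
have inf2 v : path2_end (bad_in (ZA ++ ZB)) v -> many_bad (odd v).
  move=> v2; have := bad_notin v2; rewrite mem_cat negb_or => /andP [vA vB].
  case vp: (odd v); [have [|//] := ZAP v v2.1 vp|have [|//] := ZBP v v2.1 vp];
    by move=> vZ; rewrite vZ in vA vB.
apply: (@caseI_of_links (bad_in (ZA ++ ZB)) (~~ k)) => [x /bad_inP //|X e v e2 v2 vX|//].
case: (boolP (odd e == odd v)) => [/eqP|] ev; first exact: link_bad_same.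
apply: link_bad_across => //; have := inf2 e e2; have := inf2 v v2.
by move: ev; case: (odd e); case: (odd v) => // _ infv infe; apply: br.
Qed.

Lemma caseI : two_path_partition c.
Proof.
case: (pselect (many_bad true /\ many_bad false /\ ~ bridges)) => [[infA [infB nobr]]|nondegenerate].
  exact: caseI_mono.
by apply: caseI_main => infA infB; apply: contrapT => nobr; apply: nondegenerate.
Qed.

End CaseI.

(* Some colour k has k-big vertices large on the odd side; according to whether the same
   holds on the even side, Case I or Case II applies. *)
Lemma two_paths_from_ultrafilter : two_path_partition c.
Proof.
have [k kA] : exists k, large true (big k).
  case: (largeC true (big true)) => [tA|ntA]; first by exists true.
  by exists false; apply: largeS ntA => x _; case: (big_or true x).
case: (largeC false (big k)) => [kB|nkB]; first exact: caseI kA kB.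
by apply: (caseII kA); apply: largeS nkB => x _; case: (big_or k x).
Qed.

End Ultrafilter.

Theorem mainTheorem7 (c : nat -> nat -> bool) (hc : colouring c) :
  exists (F : seq nat) (P1 P2 : nat -> Prop),
    mono_path_set c P1 /\ mono_path_set c P2 /\
    (forall v, vtx v <-> [\/ v \in F, P1 v | P2 v]) /\
    (forall v, ~ (v \in F /\ P1 v)) /\
    (forall v, ~ (v \in F /\ P2 v)) /\
    (forall v, ~ (P1 v /\ P2 v)).
Proof.
have [U [U_meet U_sub U_compl U_cofin U_proper]] := cofinite_ultrafilter.
exact: (two_paths_from_ultrafilter hc U_meet U_sub U_compl U_cofin U_proper).
Qed.
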